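(* Let $Q=(E_0,E_1,\mathbf U,\boldsymbol\alpha)$ be a quiver representation over $\mathbb{F}_q$, $a,b\in E_0$, $Q'=\Omega(Q,a,b)$, $\pi=\pi^{Q'}_Q$. Let $G\le\operatorname{Aut}(Q)$ and let $B\subseteq\operatorname{End}(Q)$ be preserved by conjugation by $G$. Let $\Xi$ be a complete set of representatives of the $G$-orbits on $\operatorname{Hom}(U_a,U_b)$ (action $\mathbf g\cdot S=g_bSg_a^{-1}$). For $S\in\Xi$ let $Q^S$ be the representation obtained from $Q$ by adding one new arrow $f:a\to b$ with $\alpha_f=S$ (so $\operatorname{End}(Q^S)\subseteq\operatorname{End}(Q)$ and $\operatorname{Aut}(Q^S)\subseteq\operatorname{Aut}(Q)$). Then $$\gamma\big(G^{Q'},\pi^{-1}(B)\big)=\sum_{S\in\Xi}\gamma\big(G\cap\operatorname{Aut}(Q^S),\,B\cap\operatorname{End}(Q^S)\big),$$ all actions being by conjugation.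
   Context: $\gamma(G,X)$ is the number of orbits of a group $G$ on a finite set $X$. A quiver representation $Q=(E_0,E_1,\mathbf U,\boldsymbol\alpha)$: finite sets $E_0$ (vertices), $E_1$ (arrows), source/target maps $\sigma,\tau$, finite-dimensional spaces $U_c$, linear maps $\alpha_e:U_{\sigma(e)}\to U_{\tau(e)}$. $\operatorname{End}(Q)$ is the ring of tuples $(X_c)_{c\in E_0}$ with $\alpha_eX_{\sigma(e)}=X_{\tau(e)}\alpha_e$; $\operatorname{Aut}(Q)$ its unit group, acting by componentwise conjugation. For an extension $Q'$ of $Q$ (vertex set containing $E_0$, same spaces on $E_0$, restrictions of endomorphisms of $Q'$ to $E_0$ are endomorphisms of $Q$), $\pi^{Q'}_Q$ is restriction to $E_0$ and $G^{Q'}=\pi^{-1}(G)\cap\operatorname{Aut}(Q')$. $\Omega(Q,a,b)$ is obtained from $Q$ by adding a vertex $c$ with a space $U'_c$ and arrows $a\to c$, $c\to b$ whose maps form a short exact sequence $0\to U_a\to U'_c\to U_b\to0$. *)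

From HB Require Import structures.
From mathcomp Require Import all_boot all_order all_algebra.
Set Implicit Arguments. Unset Strict Implicit. Unset Printing Implicit Defensive.
Import GRing.Theory.
Local Open Scope ring_scope.

(* Convention: the space at a
   vertex c is the row space 'rV[F]_(qdim c); the map attached to an arrow e
   is v |-> v *m qmap e, with qmap e : 'M_(qdim (qsrc e), qdim (qtgt e)).   *)
Record qrep (F : finFieldType) := QRep {
  qV : finType;
  qE : finType;
  qsrc : qE -> qV;
  qtgt : qE -> qV;
  qdim : qV -> nat;
  qmap : forall e : qE, 'M[F]_(qdim (qsrc e), qdim (qtgt e))
}.

Section Quiver.
Variable F : finFieldType.

Definition dtuples (V : finType) (d : V -> nat) :=
  {dffun forall c : V, 'M[F]_(d c)}.

Definition qtuples (Q : qrep F) := dtuples (@qdim F Q).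

(* End(Q): alpha_e X_{sigma e} = X_{tau e} alpha_e, in row convention *)
Definition isEnd (Q : qrep F) (X : qtuples Q) : bool :=
  [forall e : qE Q, X (qsrc e) *m qmap e == qmap e *m X (qtgt e)].

Definition EndQ (Q : qrep F) : {set qtuples Q} := [set X | isEnd X].

(* Aut(Q): the units of End(Q), i.e. endomorphisms with every component
   invertible (the inverse is then automatically an endomorphism). *)
Definition AutQ (Q : qrep F) : {set qtuples Q} :=
  [set X | isEnd X && [forall c, X c \in unitmx]].

Definition tup1 (Q : qrep F) : qtuples Q :=
  [ffun c => (1%:M : 'M[F]_(@qdim _ Q c))].
Definition tupmul (Q : qrep F) (g h : qtuples Q) : qtuples Q :=
  [ffun c => g c *m h c].
Definition tupinv (Q : qrep F) (g : qtuples Q) : qtuples Q :=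
  [ffun c => invmx (g c)].

(* conjugation X |-> g X g^{-1} (componentwise); in row convention the
   matrix of g_c o X_c o g_c^{-1} is invmx g_c *m X_c *m g_c. *)
Definition tupconj (Q : qrep F) (g X : qtuples Q) : qtuples Q :=
  [ffun c => invmx (g c) *m X c *m g c].

Definition is_subgroup (Q : qrep F) (G : {set qtuples Q}) : Prop :=
  [/\ tup1 Q \in G,
      (forall g h, g \in G -> h \in G -> tupmul g h \in G) &
      (forall g, g \in G -> tupinv g \in G)].

Definition gamma (Q : qrep F) (G X : {set qtuples Q}) : nat :=
  #|[set [set tupconj g Z | g in G] | Z in X]|.

(* Omega(Q,a,b): new vertex None with space of dimension n, new arrows
   inr true : a -> None with map i, inr false : None -> b with map p. *)
Section Omega.
Variables (Q : qrep F) (a b : qV Q) (n : nat)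
          (i : 'M[F]_(@qdim _ Q a, n)) (p : 'M[F]_(n, @qdim _ Q b)).

Definition om_src (e : qE Q + bool) : option (qV Q) :=
  match e with inl e => Some (qsrc e) | inr true => Some a | inr false => None end.
Definition om_tgt (e : qE Q + bool) : option (qV Q) :=
  match e with inl e => Some (qtgt e) | inr true => None | inr false => Some b end.
Definition om_dim (c : option (qV Q)) : nat :=
  match c with Some c => @qdim _ Q c | None => n end.
Definition om_map (e : qE Q + bool) : 'M[F]_(om_dim (om_src e), om_dim (om_tgt e)) :=
  match e as e' return 'M[F]_(om_dim (om_src e'), om_dim (om_tgt e')) with
  | inl e => qmap e
  | inr true => i
  | inr false => p
  end.

Definition Omega : qrep F := @QRep F _ _ om_src om_tgt om_dim om_map.

Definition restrict (X : qtuples Omega) : qtuples Q :=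
  [ffun c => (X (Some c) : 'M[F]_(@qdim _ Q c))].
End Omega.

Section AddArrow.
Variables (Q : qrep F) (a b : qV Q) (S : 'M[F]_(@qdim _ Q a, @qdim _ Q b)).
Definition aa_src (e : option (qE Q)) : qV Q :=
  match e with Some e => qsrc e | None => a end.
Definition aa_tgt (e : option (qE Q)) : qV Q :=
  match e with Some e => qtgt e | None => b end.
Definition aa_map (e : option (qE Q)) : 'M[F]_(@qdim _ Q (aa_src e), @qdim _ Q (aa_tgt e)) :=
  match e as e' return 'M[F]_(@qdim _ Q (aa_src e'), @qdim _ Q (aa_tgt e')) with
  | Some e => qmap e
  | None => S
  end.
Definition addArrow : qrep F := @QRep F (qV Q) _ aa_src aa_tgt (@qdim F Q) aa_map.
End AddArrow.

(* action of tuples on Hom(U_a, U_b): g . S = g_b S g_a^{-1} *)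
Definition homAct (Q : qrep F) (a b : qV Q) (g : qtuples Q)
  (S : 'M[F]_(@qdim _ Q a, @qdim _ Q b)) : 'M[F]_(@qdim _ Q a, @qdim _ Q b) :=
  invmx (g a) *m S *m g b.

Definition is_orbit_transversal (Q : qrep F) (a b : qV Q) (G : {set qtuples Q})
  (Xi : {set 'M[F]_(@qdim _ Q a, @qdim _ Q b)}) : Prop :=
  (forall S', exists2 S, S \in Xi & exists2 g, g \in G & S' = homAct g S) /\
  (forall S1 S2, S1 \in Xi -> S2 \in Xi ->
     (exists2 g, g \in G & S2 = homAct g S1) -> S1 = S2).

End Quiver.

From HB Require Import structures.
From mathcomp Require Import all_boot all_order all_algebra.
Set Implicit Arguments. Unset Strict Implicit. Unset Printing Implicit Defensive.
Import GRing.Theory.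
Local Open Scope ring_scope.

(* Both sides are evaluated with Burnside's lemma
   (#orbits * |G| = sum over G of fixed-point counts), proved below for any
   group of automorphism tuples acting on a finite set.
   Left side: we split the exact sequence once and for all; then every
   endomorphism (automorphism) of Q' = Omega(Q,a,b) restricting to X on Q is
   lift X T, whose new component is block triangular with diagonal blocks
   X_a, X_b and a free corner T : U_b -> U_a.  Hence |pi^-1(G)| = |G| q^(ab),
   and lift g T fixes lift X Z iff g fixes X and T X_a - X_b T =
   Z g_a - g_b Z; a rank count by duality shows that there are q^(ab) times
   as many such pairs (T, Z) as maps S : U_a -> U_b intertwining both X and g
   (gamma_Omega).
   Right side: for S in Xi, Burnside for the stabiliser G :&: Aut(Q^S) and
   orbit-stabiliser give gamma_S |G| = fix_pairs S |orbit S|, where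
   fix_pairs S counts the pairs (g, X) fixing S; it is constant on orbits,
   so the sum over Xi is the sum over all S, which after exchanging sums is
   the same intertwiner count (sum_gamma_addArrow).  The theorem follows by
   cancelling |G|. *)

Lemma card_set_sum (T : finType) (A : {set T}) (P : pred T) :
  #|[set x in A | P x]| = (\sum_(x in A) P x)%N.
Proof.
rewrite -sum1_card big_mkcond [RHS]big_mkcond; apply: eq_bigr => x _.
by rewrite inE; case: (x \in A); case: (P x).
Qed.

Lemma sum_setI (T : finType) (A C : {set T}) (f : T -> nat) :
  (\sum_(x in A :&: C) f x = \sum_(x in A) (x \in C) * f x)%N.
Proof.
rewrite big_mkcond [RHS]big_mkcond; apply: eq_bigr => x _.
by rewrite inE; case: (x \in A); case: (x \in C); rewrite ?mul1n ?mul0n.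
Qed.

Lemma reindex_set (T : finType) (A : {set T}) (c : T -> T) (phi : T -> nat) :
  {in A, forall x, c x \in A} -> {in A &, injective c} ->
  (\sum_(x in A) phi (c x) = \sum_(x in A) phi x)%N.
Proof.
move=> cA c_inj; rewrite -big_imset //; apply: eq_bigl => y.
suff -> : c @: A = A by [].
apply/eqP; rewrite eqEcard card_in_imset // leqnn andbT.
by apply/subsetP => z /imsetP[x Ax ->]; apply: cA.
Qed.

Lemma invmxM (F : fieldType) n (A B : 'M[F]_n) : A \in unitmx -> B \in unitmx ->
  invmx (A *m B) = invmx B *m invmx A.
Proof.
move=> uA uB; have uAB : A *m B \in unitmx by rewrite unitmx_mul uA uB.
rewrite -[RHS]mul1mx -(mulVmx uAB) -!mulmxA (mulmxA B) mulmxV // mul1mx.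
by rewrite mulmxV // mulmx1.
Qed.

Lemma invmx_intertw (F : fieldType) m k (A : 'M[F]_m) (B : 'M[F]_k) (N : 'M[F]_(m, k)) :
  A \in unitmx -> B \in unitmx -> A *m N = N *m B -> invmx A *m N = N *m invmx B.
Proof.
move=> uA uB h.
have := congr1 (fun z => invmx A *m z *m invmx B) h => /=.
by rewrite mulKmx // !mulmxA mulmxK // => <-.
Qed.

Lemma conjmx_fixE (F : fieldType) m k (A : 'M[F]_m) (B : 'M[F]_k) (S : 'M[F]_(m, k)) :
  A \in unitmx -> B \in unitmx -> (invmx A *m S *m B == S) = (A *m S == S *m B).
Proof.
move=> uA uB; apply/eqP/eqP => E.
  by rewrite -{1}E !mulmxA mulmxV // mul1mx.
by rewrite -mulmxA -E mulKmx.
Qed.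

Lemma conjmx_inj (F : fieldType) m k (A : 'M[F]_m) (B : 'M[F]_k) (M N : 'M[F]_(m, k)) :
  A \in unitmx -> B \in unitmx -> (invmx A *m M *m B == invmx A *m N *m B) = (M == N).
Proof.
move=> uA uB; apply/eqP/eqP => [E|-> //].
have := congr1 (fun z => A *m z *m invmx B) E.
by rewrite !mulmxA !mulmxK // !mulmxV // !mul1mx.
Qed.

Section LinMxTranspose.
Variable R : comRingType.

Lemma lin_mxE m1 n1 m2 n2 (f : 'M[R]_(m1, n1) -> 'M[R]_(m2, n2)) i j i' j' :
  lin_mx f (mxvec_index i j) (mxvec_index i' j') = f (delta_mx i j) i' j'.
Proof. by rewrite /lin_mx mxE /= vec_mx_delta mxvecE. Qed.

Lemma delta_mulE m n p (i : 'I_m) (j : 'I_n) (A : 'M[R]_(n, p)) i' j' :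
  (delta_mx i j *m A) i' j' = (i' == i)%:R * A j j'.
Proof.
rewrite mxE (bigD1 j) //= big1 => [|k /negbTE nkj]; last by rewrite mxE nkj andbF mul0r.
by rewrite mxE eqxx andbT addr0.
Qed.

Lemma mul_deltaE m n p (A : 'M[R]_(m, n)) (i : 'I_n) (j : 'I_p) i' j' :
  (A *m delta_mx i j) i' j' = A i' i * (j' == j)%:R.
Proof.
rewrite mxE (bigD1 i) //= big1 => [|k /negbTE nki]; last by rewrite mxE nki mulr0.
by rewrite mxE eqxx addr0.
Qed.

Lemma tr_lin_mulmxr m n (A : 'M[R]_n) : (@lin_mulmxr R m n n A)^T = lin_mulmxr A^T.
Proof.
apply/matrixP => k l; rewrite mxE.
case/mxvec_indexP: k => i j; case/mxvec_indexP: l => i' j'.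
by rewrite /lin_mulmxr !lin_mxE /= !delta_mulE mxE eq_sym.
Qed.

Lemma tr_lin_mulmx m n (B : 'M[R]_m) : (@lin_mulmx R m m n B)^T = lin_mulmx B^T.
Proof.
apply/matrixP => k l; rewrite mxE.
case/mxvec_indexP: k => i j; case/mxvec_indexP: l => i' j'.
by rewrite /lin_mulmx !lin_mxE /= !mul_deltaE mxE eq_sym.
Qed.

End LinMxTranspose.

Section LinearCount.
Variable F : finFieldType.

Definition kerset m k (C : 'M[F]_(m, k)) := [set v : 'rV[F]_m | v *m C == 0].

Lemma card_kerset m k (C : 'M[F]_(m, k)) : #|kerset C| = (#|F| ^ (m - \rank C))%N.
Proof.
have -> : kerset C = (fun u : 'rV_(\rank (kermx C)) => u *m row_base (kermx C)) @: setT.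
  apply/setP => v; rewrite inE; apply/idP/imsetP.
  - rewrite -sub_kermx -(eq_row_base (kermx C)) => /submxP[u ->].
    by exists u; rewrite ?inE.
  - case=> u _ ->; rewrite -sub_kermx; apply: (submx_trans (submxMl _ _)).
    by rewrite eq_row_base.
rewrite card_imset; last by apply: row_free_inj; exact: row_base_free.
by rewrite cardsT card_mx mul1n mxrank_ker.
Qed.

Section CommutantDuality.
Variables (da db : nat) (A1 A2 : 'M[F]_da) (B1 B2 : 'M[F]_db).

(* The linear map (T, Z) |-> (T A1 - B1 T) + (B2 Z - Z A2) on mxvec
   coordinates; its transpose is S |-> (A1 S - S B1, S B2 - A2 S). *)
Definition pair_mx : 'M[F]_(db * da + db * da, db * da) :=
  col_mx (lin_mulmxr A1 - lin_mulmx B1) (lin_mulmx B2 - lin_mulmxr A2).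

Definition pair_sol :=
  [set TZ : 'M[F]_(db, da) * 'M[F]_(db, da) |
     TZ.1 *m A1 + B2 *m TZ.2 == B1 *m TZ.1 + TZ.2 *m A2].

Definition commutant_sol :=
  [set S : 'M[F]_(da, db) | (A1 *m S == S *m B1) && (A2 *m S == S *m B2)].

Lemma card_pair_sol : #|pair_sol| = #|kerset pair_mx|.
Proof.
pose f (TZ : 'M[F]_(db, da) * 'M[F]_(db, da)) := row_mx (mxvec TZ.1) (mxvec TZ.2).
have f_inj : injective f.
  move=> [T1 Z1] [T2 Z2] /eq_row_mx /= [/(can_inj mxvecK) -> /(can_inj mxvecK) ->].
  by [].
have fC TZ : f TZ *m pair_mx =
    mxvec (TZ.1 *m A1 - B1 *m TZ.1 + (B2 *m TZ.2 - TZ.2 *m A2)).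
  by rewrite mul_row_col !mulmxBr !mul_vec_lin /= [RHS]linearD !linearB.
have eq0E (x y z w : 'M[F]_(db, da)) : (x - y + (z - w) == 0) = (x + z == y + w).
  by rewrite addrACA -opprD subr_eq0.
rewrite -(card_imset _ f_inj); apply: eq_card => w; rewrite [in RHS]inE.
apply/imsetP/idP.
- by case=> TZ; rewrite inE => H ->; rewrite fC mxvec_eq0 eq0E.
- move=> H; exists (vec_mx (lsubmx w), vec_mx (rsubmx w)).
    by rewrite inE -eq0E -mxvec_eq0 -fC /f /= !vec_mxK hsubmxK.
  by rewrite /f /= !vec_mxK hsubmxK.
Qed.

Lemma card_commutant_sol : #|commutant_sol| = #|kerset pair_mx^T|.
Proof.
pose g (S : 'M[F]_(da, db)) := mxvec S^T.
have g_inj : injective g by move=> S1 S2 /(can_inj mxvecK) /trmx_inj.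
have gC S : g S *m pair_mx^T =
    row_mx (mxvec (A1 *m S - S *m B1)^T) (mxvec (S *m B2 - A2 *m S)^T).
  rewrite tr_col_mx mul_mx_row !linearB /= !tr_lin_mulmxr !tr_lin_mulmx.
  by rewrite /g !mul_vec_lin /= !trmx_mul.
have gCE S : (g S *m pair_mx^T == 0) = (S \in commutant_sol).
  by rewrite gC row_mx_eq0 !mxvec_eq0 !trmx_eq0 !subr_eq0 inE [S *m B2 == _]eq_sym.
rewrite -(card_imset _ g_inj); apply: eq_card => v; rewrite [in RHS]inE.
apply/imsetP/idP => [[S SC ->]|H]; first by rewrite gCE.
exists (vec_mx v)^T; last by rewrite /g trmxK vec_mxK.
by rewrite -gCE /g trmxK vec_mxK.
Qed.

Lemma count_pair_sol :
  #|pair_sol| = (#|F| ^ (db * da) * #|commutant_sol|)%N.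
Proof.
rewrite card_pair_sol card_commutant_sol !card_kerset mxrank_tr -expnD.
by rewrite addnBA // rank_leq_col.
Qed.

End CommutantDuality.
End LinearCount.

Section TupleGroup.
Variable F : finFieldType.
Implicit Types Q : qrep F.

Lemma isEndP Q (X : qtuples Q) :
  reflect (forall e, X (qsrc e) *m qmap e = qmap e *m X (qtgt e)) (isEnd X).
Proof. by apply: (iffP forallP) => h e; apply/eqP; apply: h. Qed.

Lemma inEnd Q (X : qtuples Q) : (X \in EndQ Q) = isEnd X.
Proof. by rewrite inE. Qed.

Lemma inAut Q (g : qtuples Q) : (g \in AutQ Q) = isEnd g && [forall c, g c \in unitmx].
Proof. by rewrite inE. Qed.

Lemma Aut_unit Q (g : qtuples Q) c : g \in AutQ Q -> g c \in unitmx.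
Proof. by rewrite inAut => /andP[_ /forallP ->]. Qed.

Lemma Aut_End Q (g : qtuples Q) : g \in AutQ Q -> isEnd g.
Proof. by rewrite inAut => /andP[]. Qed.

Lemma tupmulA Q : associative (@tupmul F Q).
Proof. by move=> g h k; apply/ffunP => c; rewrite !ffunE mulmxA. Qed.

Lemma tupmul1 Q : right_id (tup1 Q) (@tupmul F Q).
Proof. by move=> g; apply/ffunP => c; rewrite !ffunE mulmx1. Qed.

Lemma tup1mul Q : left_id (tup1 Q) (@tupmul F Q).
Proof. by move=> g; apply/ffunP => c; rewrite !ffunE mul1mx. Qed.

Lemma tupmulV Q (g : qtuples Q) : g \in AutQ Q -> tupmul g (tupinv g) = tup1 Q.
Proof. by move=> gA; apply/ffunP => c; rewrite !ffunE mulmxV // Aut_unit. Qed.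

Lemma tupVmul Q (g : qtuples Q) : g \in AutQ Q -> tupmul (tupinv g) g = tup1 Q.
Proof. by move=> gA; apply/ffunP => c; rewrite !ffunE mulVmx // Aut_unit. Qed.

Lemma Aut_1 Q : tup1 Q \in AutQ Q.
Proof.
rewrite inAut; apply/andP; split; first by apply/isEndP => e; rewrite !ffunE mul1mx mulmx1.
by apply/forallP => c; rewrite ffunE unitmx1.
Qed.

Lemma Aut_mul Q (g h : qtuples Q) : g \in AutQ Q -> h \in AutQ Q -> tupmul g h \in AutQ Q.
Proof.
move=> gA hA; rewrite inAut; apply/andP; split.
  move/isEndP: (Aut_End gA) => Eg; move/isEndP: (Aut_End hA) => Eh.
  by apply/isEndP => e; rewrite !ffunE -mulmxA Eh mulmxA Eg mulmxA.
by apply/forallP => c; rewrite ffunE unitmx_mul !Aut_unit.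
Qed.

Lemma Aut_inv Q (g : qtuples Q) : g \in AutQ Q -> tupinv g \in AutQ Q.
Proof.
move=> gA; rewrite inAut; apply/andP; split.
  apply/isEndP => e; rewrite !ffunE; apply: invmx_intertw; rewrite ?Aut_unit //.
  by move/isEndP: (Aut_End gA).
by apply/forallP => c; rewrite ffunE unitmx_inv Aut_unit.
Qed.

Lemma tupconj1 Q (X : qtuples Q) : tupconj (tup1 Q) X = X.
Proof. by apply/ffunP => c; rewrite !ffunE invmx1 mul1mx mulmx1. Qed.

Lemma tupconjM Q (g h X : qtuples Q) : g \in AutQ Q -> h \in AutQ Q ->
  tupconj (tupmul g h) X = tupconj h (tupconj g X).
Proof. by move=> gA hA; apply/ffunP => c; rewrite !ffunE invmxM ?Aut_unit // !mulmxA. Qed.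

Lemma End_conj Q (g X : qtuples Q) : g \in AutQ Q -> isEnd X -> isEnd (tupconj g X).
Proof.
move=> gA /isEndP EX; have /isEndP Eg := Aut_End gA.
apply/isEndP => e; rewrite !ffunE.
have Ei := invmx_intertw (Aut_unit (qsrc e) gA) (Aut_unit (qtgt e) gA) (Eg e).
rewrite -!mulmxA Eg !mulmxA -Ei -!mulmxA.
by rewrite (mulmxA (X (qsrc e))) EX -mulmxA.
Qed.

Lemma homAct1 Q (a b : qV Q) (S : 'M[F]_(qdim a, qdim b)) : homAct (tup1 Q) S = S.
Proof. by rewrite /homAct !ffunE invmx1 mul1mx mulmx1. Qed.

Lemma homActM Q (a b : qV Q) (g h : qtuples Q) (S : 'M[F]_(qdim a, qdim b)) :
  g \in AutQ Q -> h \in AutQ Q -> homAct (tupmul g h) S = homAct h (homAct g S).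
Proof. by move=> gA hA; rewrite /homAct !ffunE invmxM ?Aut_unit // !mulmxA. Qed.

Lemma tupconjK Q (h X : qtuples Q) : h \in AutQ Q -> tupconj (tupinv h) (tupconj h X) = X.
Proof. by move=> hA; rewrite -tupconjM ?Aut_inv // tupmulV // tupconj1. Qed.

Lemma homActK Q (a b : qV Q) (h : qtuples Q) (S : 'M[F]_(qdim a, qdim b)) :
  h \in AutQ Q -> homAct (tupinv h) (homAct h S) = S.
Proof. by move=> hA; rewrite -homActM ?Aut_inv // tupmulV // homAct1. Qed.

End TupleGroup.

Section TupleAction.
Variables (F : finFieldType) (Q : qrep F) (G : {set qtuples Q}).
Hypotheses (GA : G \subset AutQ Q) (HG : is_subgroup G).
Variables (T : finType) (act : T -> qtuples Q -> T).
Hypotheses (act1 : forall x, act x (tup1 Q) = x)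
  (actM : forall x, {in G &, forall g h, act x (tupmul g h) = act (act x g) h}).

Let inA g : g \in G -> g \in AutQ Q. Proof. exact: (subsetP GA). Qed.
Let G1 : tup1 Q \in G. Proof. by case: HG. Qed.
Let GM g h : g \in G -> h \in G -> tupmul g h \in G. Proof. by case: HG => _ hM _; apply: hM. Qed.
Let GV g : g \in G -> tupinv g \in G. Proof. by case: HG => _ _ hV; apply: hV. Qed.

Definition orbit x := [set act x g | g in G].

Lemma orbit_refl x : x \in orbit x.
Proof. by apply/imsetP; exists (tup1 Q); rewrite ?act1. Qed.

Lemma orbit_eq x y : y \in orbit x -> orbit y = orbit x.
Proof.
case/imsetP=> h Gh ->; apply/setP => z; apply/imsetP/imsetP.
- by case=> g Gg ->; exists (tupmul h g); rewrite ?GM ?actM.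
- case=> g Gg ->; exists (tupmul (tupinv h) g); rewrite ?GM ?GV //.
  by rewrite -actM ?GM ?GV // tupmulA tupmulV ?inA // tup1mul.
Qed.

Lemma orbit_stabilizer x :
  (#|[set g in G | act x g == x]| * #|orbit x| = #|G|)%N.
Proof.
rewrite -[RHS]sum1_card (partition_big_imset (act x)) /= mulnC -sum_nat_const.
apply: eq_bigr => y /imsetP[h Gh ->]; rewrite sum1_card.
have -> : [set g in G | act x g == x] =
    [set tupmul g (tupinv h) | g in [set g in G | act x g == act x h]].
  apply/setP => k; rewrite inE; apply/andP/imsetP.
  - case=> Gk /eqP axk; exists (tupmul k h); last first.
      by rewrite -tupmulA tupmulV ?inA // tupmul1.
    by rewrite inE GM //= actM // axk eqxx.
  - case=> g; rewrite inE => /andP[Gg /eqP axg] ->.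
    by rewrite GM ?GV // actM ?GV // axg -actM ?GV // tupmulV ?inA // act1.
rewrite card_in_imset; first by apply: eq_card => g; rewrite !inE.
move=> g1 g2 _ _ /(congr1 (fun k => tupmul k h)).
by rewrite -!tupmulA !tupVmul ?inA // !tupmul1.
Qed.

Lemma burnside (X : {set T}) : {in X & G, forall x g, act x g \in X} ->
  (#|orbit @: X| * #|G| = \sum_(g in G) #|[set x in X | act x g == x]|)%N.
Proof.
move=> XG.
have orbX x : x \in X -> orbit x \subset X.
  by move=> Xx; apply/subsetP=> y /imsetP[g Gg ->]; apply: XG.
transitivity (\sum_(x in X) #|[set g in G | act x g == x]|)%N; last first.
  under eq_bigr do rewrite card_set_sum.
  under [RHS]eq_bigr do rewrite card_set_sum.
  exact: exchange_big.
rewrite (partition_big_imset orbit) /= -sum_nat_const.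
apply: eq_bigr => O /imsetP[x0 Xx0 ->].
rewrite (eq_bigl (mem (orbit x0))); last first.
  move=> x; apply/andP/idP => [[_ /eqP <-]|xO]; first exact: orbit_refl.
  by split; [apply: (subsetP (orbX _ Xx0)) | rewrite (orbit_eq xO)].
have Opos : (0 < #|orbit x0|)%N by apply/card_gt0P; exists x0; apply: orbit_refl.
apply/eqP; rewrite -(eqn_pmul2r Opos) big_distrl /=; apply/eqP.
rewrite (eq_bigr (fun _ => #|G|)); first by rewrite sum_nat_const mulnC.
by move=> x xO; rewrite -(orbit_eq xO) orbit_stabilizer.
Qed.

End TupleAction.

Definition splitting (F : fieldType) m n k (i : 'M[F]_(m, n)) (p : 'M[F]_(n, k))
    (j : 'M[F]_(n, m)) (s : 'M[F]_(k, n)) :=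
  [/\ i *m j = 1%:M, s *m p = 1%:M, i *m p = 0, s *m j = 0 & j *m i + p *m s = 1%:M].

Lemma split_exact (F : fieldType) m n k (i : 'M[F]_(m, n)) (p : 'M[F]_(n, k)) :
  row_free i -> row_full p -> (i == kermx p)%MS -> exists j s, splitting i p j s.
Proof.
move=> i_inj p_surj /andP[iK Ki].
have ip : i *m p = 0 by apply/eqP; rewrite -sub_kermx.
have [s sp] := row_fullP p_surj.
have [j0 ij0] := row_freeP i_inj.
exists ((1%:M - p *m s) *m j0), s; split=> //.
- by rewrite mulmxA mulmxBr mulmx1 mulmxA ip mul0mx subr0 ij0.
- by rewrite mulmxA mulmxBr mulmx1 mulmxA sp mul1mx subrr mul0mx.
have Ek : (1%:M - p *m s <= kermx p)%MS.
  by rewrite sub_kermx mulmxBl mul1mx -mulmxA sp mulmx1 subrr.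
have /submxP[D ED] := submx_trans Ek Ki.
by rewrite ED -!mulmxA (mulmxA i j0 i) ij0 mul1mx -ED subrK.
Qed.

(* With respect to a splitting, U' = i(U) + s(W), and the maps of U' that
   are compatible with i and p are exactly the block triangular ones, with
   diagonal blocks A on U, B on W and an arbitrary corner T : W -> U. *)
Section SplitBlocks.
Variables (F : fieldType) (m n k : nat) (i : 'M[F]_(m, n)) (p : 'M[F]_(n, k))
  (j : 'M[F]_(n, m)) (s : 'M[F]_(k, n)).
Hypothesis spl : splitting i p j s.

Let ij : i *m j = 1%:M. Proof. by case: spl. Qed.
Let sp : s *m p = 1%:M. Proof. by case: spl. Qed.
Let ip : i *m p = 0. Proof. by case: spl. Qed.
Let sj : s *m j = 0. Proof. by case: spl. Qed.
Let jips : j *m i + p *m s = 1%:M. Proof. by case: spl. Qed.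
Let ijR r (X : 'M[F]_(r, m)) : X *m i *m j = X.
Proof. by rewrite -mulmxA ij mulmx1. Qed.
Let spR r (X : 'M[F]_(r, k)) : X *m s *m p = X.
Proof. by rewrite -mulmxA sp mulmx1. Qed.
Let ipR r (X : 'M[F]_(r, m)) : X *m i *m p = 0.
Proof. by rewrite -mulmxA ip mulmx0. Qed.
Let sjR r (X : 'M[F]_(r, k)) : X *m s *m j = 0.
Proof. by rewrite -mulmxA sj mulmx0. Qed.

Definition tri_mx (A : 'M[F]_m) (T : 'M[F]_(k, m)) (B : 'M[F]_k) : 'M[F]_n :=
  j *m A *m i + p *m T *m i + p *m B *m s.

Lemma tri_mx_mul A T B A' T' B' :
  tri_mx A T B *m tri_mx A' T' B' = tri_mx (A *m A') (T *m A' + B *m T') (B *m B').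
Proof.
rewrite /tri_mx !mulmxDl !mulmxDr !mulmxA !ijR !ipR !spR !sjR.
by rewrite !mul0mx !addr0 !add0r mulmxDl !addrA.
Qed.

Lemma tri_mx_i A T B : i *m tri_mx A T B = A *m i.
Proof. by rewrite /tri_mx !mulmxDr !mulmxA ij ip !mul0mx !addr0 mul1mx. Qed.

Lemma tri_mx_p A T B : tri_mx A T B *m p = p *m B.
Proof. by rewrite /tri_mx !mulmxDl !ipR !spR !add0r. Qed.

(* The three blocks are recovered as  i Y j,  s Y j  and  s Y p. *)
Lemma tri_mx_inj A T B A' T' B' :
  tri_mx A T B = tri_mx A' T' B' -> [/\ A = A', T = T' & B = B'].
Proof.
have blockA A1 T1 B1 : i *m tri_mx A1 T1 B1 *m j = A1 by rewrite tri_mx_i ijR.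
have blockB A1 T1 B1 : s *m tri_mx A1 T1 B1 *m p = B1.
  by rewrite -mulmxA tri_mx_p mulmxA sp mul1mx.
have blockT A1 T1 B1 : s *m tri_mx A1 T1 B1 *m j = T1.
  rewrite /tri_mx !mulmxDr !mulmxDl !mulmxA sj sp !mul0mx !ijR !sjR.
  by rewrite mul1mx add0r addr0.
move=> E; split.
- by rewrite -(blockA A T B) E blockA.
- by rewrite -(blockT A T B) E blockT.
- by rewrite -(blockB A T B) E blockB.
Qed.

Lemma tri_mx_unit A T B : A \in unitmx -> B \in unitmx -> tri_mx A T B \in unitmx.
Proof.
move=> uA uB.
have E : tri_mx A T B *m tri_mx (invmx A) (- (invmx B *m T *m invmx A)) (invmx B)
    = 1%:M.
  rewrite tri_mx_mul !mulmxV // mulmxN !mulmxA mulmxV // mul1mx subrr.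
  by rewrite /tri_mx !mulmx1 mulmx0 mul0mx addr0.
by case: (mulmx1_unit E).
Qed.

Lemma tri_mxP A B (Y : 'M[F]_n) : A *m i = i *m Y -> Y *m p = p *m B ->
  Y = tri_mx A (s *m Y *m j) B.
Proof.
move=> Hi Hp.
have E1 : Y = j *m (A *m i) + p *m (s *m Y).
  by rewrite Hi !mulmxA -mulmxDl jips mul1mx.
have E2 : s *m Y = s *m Y *m j *m i + B *m s.
  rewrite -[LHS]mulmx1 -jips mulmxDr !mulmxA -(mulmxA s Y p) Hp.
  by rewrite (mulmxA s p) sp mul1mx.
by rewrite {1}E1 {1}E2 mulmxDr /tri_mx !mulmxA addrA.
Qed.

End SplitBlocks.

Section Omega.
Variables (F : finFieldType) (Q : qrep F) (a b : qV Q) (n : nat)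
  (i : 'M[F]_(qdim a, n)) (p : 'M[F]_(n, qdim b))
  (j : 'M[F]_(n, qdim a)) (s : 'M[F]_(qdim b, n)).
Hypothesis spl : splitting i p j s.

Local Notation da := (qdim a).
Local Notation db := (qdim b).
Local Notation Q' := (Omega i p).
Local Notation res := (@restrict F Q a b n i p).

Definition extend (g : qtuples Q) (H : 'M[F]_n) : qtuples Q' :=
  finfun (fun c : option (qV Q) =>
    match c as c' return 'M[F]_(@qdim _ Q' c') with Some c0 => g c0 | None => H end).

Definition lift (g : qtuples Q) (T : 'M[F]_(db, da)) : qtuples Q' :=
  extend g (tri_mx i p j s (g a) T (g b)).

Lemma res_extend g H : res (extend g H) = g.
Proof. by apply/ffunP => c; rewrite !ffunE. Qed.

Lemma extend_None g H : extend g H None = H.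
Proof. by rewrite ffunE. Qed.

Lemma extend_res (X : qtuples Q') : X = extend (res X) (X None).
Proof. by apply/ffunP => -[c|]; rewrite !ffunE. Qed.

Lemma resE (X : qtuples Q') c : res X c = X (Some c).
Proof. by rewrite ffunE. Qed.

Lemma lift_inj g : injective (lift g).
Proof.
move=> T1 T2 /(congr1 (fun X : qtuples Q' => X None)).
by rewrite /lift !extend_None => /(tri_mx_inj spl)[].
Qed.

Lemma mem_preimage (W : {set qtuples Q'}) (C : {set qtuples Q}) X :
  (X \in [set Y in W | res Y \in C]) = (X \in W) && (res X \in C).
Proof. by rewrite inE. Qed.

Lemma isEnd_Omega (X : qtuples Q') : isEnd X =
  [&& isEnd (res X), X (Some a) *m i == i *m X None & X None *m p == p *m X (Some b)].
Proof.
apply/isEndP/and3P.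
- move=> h; split.
  + by apply/isEndP => e; rewrite !resE; apply: (h (inl e)).
  + by apply/eqP; apply: (h (inr true)).
  + by apply/eqP; apply: (h (inr false)).
- case=> /isEndP h /eqP h1 /eqP h2 [e|[]] //=.
  by have := h e; rewrite !resE.
Qed.

Lemma res_mul (g h : qtuples Q') : res (tupmul g h) = tupmul (res g) (res h).
Proof. by apply/ffunP => c; rewrite !ffunE. Qed.
Lemma res_inv (g : qtuples Q') : res (tupinv g) = tupinv (res g).
Proof. by apply/ffunP => c; rewrite !ffunE. Qed.
Lemma res_conj (g X : qtuples Q') : res (tupconj g X) = tupconj (res g) (res X).
Proof. by apply/ffunP => c; rewrite !ffunE. Qed.
Lemma res_1 : res (tup1 Q') = tup1 Q.
Proof. by apply/ffunP => c; rewrite !ffunE. Qed.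

Lemma fiber_End (g : qtuples Q) : isEnd g ->
  [set X in EndQ Q' | res X == g] = lift g @: setT.
Proof.
move=> Eg; apply/setP => X; rewrite !inE; apply/andP/imsetP.
- case; rewrite isEnd_Omega => /and3P[_ /eqP h1 /eqP h2] /eqP rX.
  exists (s *m X None *m j) => //.
  rewrite {1}(extend_res X) /lift rX; congr extend.
  by apply: (tri_mxP spl); rewrite -rX !resE.
- case=> T _ ->; rewrite isEnd_Omega /lift res_extend Eg extend_None !ffunE.
  by rewrite (tri_mx_i spl) (tri_mx_p spl) !eqxx.
Qed.

Lemma fiber_Aut (g : qtuples Q) : g \in AutQ Q ->
  [set X in AutQ Q' | res X == g] = lift g @: setT.
Proof.
move=> Ag; rewrite -(fiber_End (Aut_End Ag)); apply/setP => X.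
have memE (W : {set qtuples Q'}) : (X \in [set Y in W | res Y == g]) = (X \in W) && (res X == g).
  by rewrite inE.
rewrite !memE inAut inEnd; apply/andP/andP => -[XQ' /eqP rX].
  by case/andP: XQ' => EX _; rewrite EX rX.
rewrite XQ' rX eqxx; split=> //; move: XQ'; rewrite isEnd_Omega => /and3P[_ /eqP h1 /eqP h2].
apply/forallP => -[c|]; first by rewrite -resE rX (Aut_unit _ Ag).
by rewrite (tri_mxP spl h1 h2) (tri_mx_unit spl) // -resE rX (Aut_unit _ Ag).
Qed.

Lemma eq_Omega (X Y : qtuples Q') : (X == Y) = (res X == res Y) && (X None == Y None).
Proof.
apply/eqP/andP => [->|[/eqP h /eqP h0]]; first by rewrite !eqxx.
by rewrite (extend_res X) (extend_res Y) h h0.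
Qed.

Lemma lift_fixE (g X : qtuples Q) T Z : g \in AutQ Q ->
  (tupconj (lift g T) (lift X Z) == lift X Z) =
  (tupconj g X == X) && (T *m X a + g b *m Z == X b *m T + Z *m g a).
Proof.
move=> Ag; rewrite eq_Omega res_conj /lift !res_extend ffunE !extend_None.
rewrite conjmx_fixE ?(tri_mx_unit spl) ?Aut_unit // !(tri_mx_mul spl).
case: eqP => [/ffunP gX|] //=.
have gXc c : g c *m X c = X c *m g c.
  by apply/eqP; rewrite -conjmx_fixE ?Aut_unit //; have := gX c; rewrite ffunE => ->.
rewrite !gXc; apply/eqP/eqP => [/(tri_mx_inj spl) [_ -> _] | ->]; by rewrite addrC.
Qed.

Lemma sum_fibers (W : {set qtuples Q'}) (C : {set qtuples Q}) (phi : qtuples Q' -> nat) :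
  {in C, forall g, [set X in W | res X == g] = lift g @: setT} ->
  (\sum_(X in [set X in W | res X \in C]) phi X =
   \sum_(g in C) \sum_(T : 'M[F]_(db, da)) phi (lift g T))%N.
Proof.
move=> fibC; rewrite (partition_big res (mem C)) /=; last by move=> X; rewrite inE => /andP[].
apply: eq_bigr => g Cg.
rewrite (eq_bigl (mem [set X in W | res X == g])); last first.
  by move=> X; rewrite !inE; case: eqP => [->|]; rewrite ?Cg ?andbT ?andbF.
rewrite fibC // big_imset /=; last by move=> T1 T2 _ _; apply: lift_inj.
by apply: eq_bigl => T; rewrite inE.
Qed.

Definition intertwiners (g X : qtuples Q) :=
  [set S : 'M[F]_(da, db) | (X a *m S == S *m X b) && (g a *m S == S *m g b)].

(* Numerator of Burnside's lemma for pi^-1(G) acting on pi^-1(B). *)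
Lemma fixed_points_Omega (G B : {set qtuples Q}) : G \subset AutQ Q -> B \subset EndQ Q ->
  (\sum_(g' in [set g in AutQ Q' | res g \in G])
      #|[set X' in [set X in EndQ Q' | res X \in B] | tupconj g' X' == X']| =
   \sum_(g in G) (#|F| ^ (db * da) *
        \sum_(X in B) (tupconj g X == X) * #|intertwiners g X|))%N.
Proof.
move=> /subsetP GA /subsetP BE.
have fibG : {in G, forall g, [set X in AutQ Q' | res X == g] = lift g @: setT}.
  by move=> g /GA; apply: fiber_Aut.
have fibB : {in B, forall g, [set X in EndQ Q' | res X == g] = lift g @: setT}.
  by move=> X /BE; rewrite inEnd; apply: fiber_End.
rewrite sum_fibers //; apply: eq_bigr => g Gg.
rewrite (eq_bigr _ (fun T _ => card_set_sum _ _)) /=.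
under eq_bigr do rewrite sum_fibers //.
rewrite exchange_big /= big_distrr /=; apply: eq_bigr => X XB.
under eq_bigr do under eq_bigr do rewrite lift_fixE ?GA //.
case: (tupconj g X =P X) => [_|_] /=; last first.
  by rewrite muln0; apply: big1 => T _; apply: big1.
rewrite mul1n /intertwiners -(count_pair_sol (X a) (g a) (X b) (g b)) /pair_sol.
rewrite (pair_big xpredT xpredT) -sum1_card [RHS]big_mkcond /=.
by apply: eq_big => // -[T Z] _; rewrite inE; case: eqP.
Qed.

Section Preimage.
Variables (G B : {set qtuples Q}).
Hypotheses (GA : G \subset AutQ Q) (HG : is_subgroup G) (BE : B \subset EndQ Q)
  (HBinv : forall g X, g \in G -> X \in B -> tupconj g X \in B).

Local Notation G' := [set g in AutQ Q' | res g \in G].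
Local Notation B' := [set X in EndQ Q' | res X \in B].

Lemma preimage_AutQ : G' \subset AutQ Q'.
Proof. by apply/subsetP => g; rewrite mem_preimage => /andP[]. Qed.

Lemma preimage_subgroup : is_subgroup G'.
Proof.
case: HG => G1 GM GV; split.
- by rewrite mem_preimage Aut_1 res_1 G1.
- move=> g h; rewrite !mem_preimage => /andP[Ag Gg] /andP[Ah Gh].
  by rewrite Aut_mul // res_mul GM.
- by move=> g; rewrite !mem_preimage => /andP[Ag Gg]; rewrite Aut_inv // res_inv GV.
Qed.

Lemma card_preimage : #|G'| = (#|G| * #|F| ^ (db * da))%N.
Proof.
have fibG : {in G, forall g, [set X in AutQ Q' | res X == g] = lift g @: setT}.
  by move=> g /(subsetP GA); apply: fiber_Aut.
rewrite -sum1_card (sum_fibers _ fibG) sum_nat_const; congr (_ * _)%N.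
by rewrite sum_nat_const card_mx muln1.
Qed.

(* Burnside's lemma for pi^-1(G) acting on pi^-1(B), with the common factor
   q^(ab) = |Hom(U_b, U_a)| cancelled. *)
Lemma gamma_Omega : (gamma G' B' * #|G| =
  \sum_(g in G) \sum_(X in B) (tupconj g X == X) * #|intertwiners g X|)%N.
Proof.
have conjM (X : qtuples Q') :
    {in G' &, forall g h, tupconj (tupmul g h) X = tupconj h (tupconj g X)}.
  by move=> g h /(subsetP preimage_AutQ) gA /(subsetP preimage_AutQ) hA; apply: tupconjM.
have B'stable : {in B' & G', forall X g, tupconj g X \in B'}.
  move=> X g; rewrite !mem_preimage res_conj inEnd => /andP[EX BX] /andP[Ag Gg].
  by rewrite inEnd End_conj ?HBinv.
have := burnside preimage_AutQ preimage_subgroup (@tupconj1 _ _) conjM B'stable.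
rewrite fixed_points_Omega // -big_distrr card_preimage mulnA /= => /eqP.
have qpos : (0 < #|F| ^ (db * da))%N by rewrite expn_gt0 (cardD1 0).
by rewrite [X in (X == _)]mulnC eqn_pmul2l // => /eqP.
Qed.

End Preimage.
End Omega.

Section Transversal.
Variables (F : finFieldType) (Q : qrep F) (a b : qV Q) (G B : {set qtuples Q}).
Hypotheses (GA : G \subset AutQ Q) (HG : is_subgroup G) (BE : B \subset EndQ Q)
  (HBinv : forall g X, g \in G -> X \in B -> tupconj g X \in B).

Local Notation da := (qdim a).
Local Notation db := (qdim b).
Local Notation hact := (fun (S : 'M[F]_(da, db)) g => homAct g S).
Local Notation homOrbit := (orbit G hact).

Let inA g : g \in G -> g \in AutQ Q. Proof. exact: (subsetP GA). Qed.
Let G1 : tup1 Q \in G. Proof. by case: HG. Qed.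
Let GM g h : g \in G -> h \in G -> tupmul g h \in G. Proof. by case: HG => _ hM _; apply: hM. Qed.
Let GV g : g \in G -> tupinv g \in G. Proof. by case: HG => _ _ hV; apply: hV. Qed.
Let isEndB X : X \in B -> isEnd X. Proof. by move/(subsetP BE); rewrite inEnd. Qed.
Let homAct_actM (S : 'M[F]_(da, db)) : {in G &, forall g h, homAct (tupmul g h) S = homAct h (homAct g S)}.
Proof. by move=> g h /inA gA /inA hA; apply: homActM. Qed.

Lemma isEnd_addArrow (S : 'M[F]_(da, db)) (X : qtuples Q) :
  @isEnd F (addArrow S) X = isEnd X && (X a *m S == S *m X b).
Proof.
apply/isEndP/andP.
- move=> h; split; last by apply/eqP; apply: (h None).
  by apply/isEndP => e; apply: (h (Some e)).
- by case=> /isEndP h /eqP h0 [e|] //=; apply: h.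
Qed.

Lemma Aut_addArrow (S : 'M[F]_(da, db)) g : g \in AutQ Q ->
  (g \in @AutQ F (addArrow S)) = (homAct g S == S).
Proof.
move=> Ag; rewrite /homAct conjmx_fixE ?Aut_unit // (@inAut F (addArrow S)) isEnd_addArrow.
by move: Ag; rewrite inAut => /andP[-> ->]; rewrite andbT.
Qed.

Lemma stabilizer_addArrow (S : 'M[F]_(da, db)) :
  [set g in G | homAct g S == S] = G :&: AutQ (addArrow S).
Proof.
apply/setP => g; rewrite in_setI [in LHS]inE.
by case Gg: (g \in G); rewrite //= Aut_addArrow ?inA.
Qed.

Lemma stabilizer_subgroup (S : 'M[F]_(da, db)) : is_subgroup (G :&: AutQ (addArrow S)).
Proof.
split; first by rewrite in_setI G1 (@Aut_1 F (addArrow S)).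
- move=> g h; rewrite !in_setI => /andP[Gg Ag] /andP[Gh Ah].
  by rewrite GM // (@Aut_mul F (addArrow S)).
- by move=> g; rewrite !in_setI => /andP[Gg Ag]; rewrite GV // (@Aut_inv F (addArrow S)).
Qed.

Definition fix_pairs (S : 'M[F]_(da, db)) :=
  (\sum_(g in G) \sum_(X in B)
     [&& homAct g S == S, tupconj g X == X & X a *m S == S *m X b])%N.

(* Burnside for the stabiliser of S, combined with orbit-stabiliser. *)
Lemma gamma_addArrow (S : 'M[F]_(da, db)) :
  (gamma (G :&: AutQ (addArrow S)) (B :&: EndQ (addArrow S)) * #|G| =
   fix_pairs S * #|homOrbit S|)%N.
Proof.
rewrite -(orbit_stabilizer GA HG (act := hact) (@homAct1 _ _ _ _) homAct_actM S).
rewrite stabilizer_addArrow mulnA; congr (_ * _)%N.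
have GSA : G :&: AutQ (addArrow S) \subset AutQ (addArrow S) by apply: subsetIr.
have conjM (X : qtuples (addArrow S)) : {in G :&: AutQ (addArrow S) &, forall g h,
    tupconj (tupmul g h) X = tupconj h (tupconj g X)}.
  by move=> g h; rewrite !in_setI => /andP[_ gA] /andP[_ hA]; apply: tupconjM.
rewrite /gamma (@burnside F (addArrow S) _ GSA (stabilizer_subgroup S) _ _ (@tupconj1 _ _) conjM); last first.
  move=> X g; rewrite !in_setI (@inEnd F (addArrow S)) => /andP[XB XE] /andP[Gg Ag].
  by rewrite HBinv //= (@inEnd F (addArrow S)) End_conj.
rewrite sum_setI /fix_pairs; apply: eq_bigr => g Gg.
rewrite Aut_addArrow ?inA // card_set_sum sum_setI big_distrr /=.
apply: eq_bigr => X XB; rewrite inE isEnd_addArrow isEndB //=.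
by case: (homAct g S == S); case: (tupconj g X == X); case: (X a *m S == S *m X b).
Qed.

(* fix_pairs is constant on orbits: reindex by g |-> h^-1 g h and X |-> h.X. *)
Lemma fix_pairs_homAct h S : h \in G -> fix_pairs (homAct h S) = fix_pairs S.
Proof.
move=> Gh; have Ah := inA Gh.
pose cG g := tupmul (tupmul (tupinv h) g) h.
have cG_in g : g \in G -> cG g \in G by move=> Gg; rewrite /cG !GM ?GV.
have cG_inj : {in G &, injective cG}.
  move=> g1 g2 _ _ E.
  have K g : tupmul h (tupmul (cG g) (tupinv h)) = g.
    by rewrite /cG -!tupmulA tupmulV // tupmul1 !tupmulA tupmulV // tup1mul.
  by rewrite -(K g1) E K.
have conj_inj : {in B &, injective (tupconj h)}.
  by move=> X1 X2 _ _; apply: (can_inj (fun Y => tupconjK Y Ah)).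
rewrite /fix_pairs -(reindex_set _ cG_in cG_inj); apply: eq_bigr => g Gg.
rewrite -(reindex_set _ (fun X XB => HBinv Gh XB) conj_inj).
apply: eq_bigr => X XB; have Ag := inA Gg.
have cG_S : (homAct (cG g) (homAct h S) == homAct h S) = (homAct g S == S).
  rewrite /cG !homActM ?Aut_mul ?Aut_inv // homActK //.
  by rewrite /homAct conjmx_inj ?Aut_unit.
have cG_X : (tupconj (cG g) (tupconj h X) == tupconj h X) = (tupconj g X == X).
  rewrite /cG !tupconjM ?Aut_mul ?Aut_inv // tupconjK //.
  by rewrite (inj_eq (can_inj (fun Y => tupconjK Y Ah))).
have hXS : ((tupconj h X) a *m homAct h S == homAct h S *m (tupconj h X) b) =
           (X a *m S == S *m X b).
  rewrite !ffunE /homAct !mulmxA !mulmxK ?Aut_unit // -!(mulmxA (invmx (h a))).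
  rewrite (mulmxA (invmx (h a)) (X a *m S)) (mulmxA (invmx (h a)) (S *m X b)).
  by rewrite conjmx_inj ?Aut_unit.
by rewrite cG_S cG_X hXS.
Qed.

Lemma sum_fix_pairs_transversal (Xi : {set 'M[F]_(da, db)}) : is_orbit_transversal G Xi ->
  (\sum_(S' : 'M[F]_(da, db)) fix_pairs S' = \sum_(S in Xi) fix_pairs S * #|homOrbit S|)%N.
Proof.
case=> Xi_cover Xi_uniq.
have homOrbitP S S' : (homOrbit S' == homOrbit S) = (S' \in homOrbit S).
  apply/eqP/idP => [<-|]; first exact: (orbit_refl HG (act := hact) (@homAct1 _ _ _ _)).
  exact: (orbit_eq GA HG (act := hact) homAct_actM).
rewrite [LHS](eq_bigl (mem [set: 'M[F]_(da, db)])); last by move=> S; rewrite /= inE.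
rewrite (partition_big_imset (fun S => homOrbit S)) /=.
have -> : [set homOrbit S | S in setT] = [set homOrbit S | S in Xi].
  apply/setP => O; apply/imsetP/imsetP => -[S' SXi ->]; last by exists S'.
  have [S XiS [g Gg ->]] := Xi_cover S'.
  by exists S => //; apply/eqP; rewrite homOrbitP; apply/imsetP; exists g.
rewrite big_imset /=; last first.
  move=> S1 S2 XiS1 XiS2 E; apply: Xi_uniq => //.
  have /imsetP[g Gg ->] : S2 \in homOrbit S1 by rewrite -homOrbitP E.
  by exists g.
apply: eq_bigr => S XiS.
rewrite (eq_bigl (mem (homOrbit S))); last by move=> S'; rewrite inE homOrbitP.
rewrite (eq_bigr (fun _ => fix_pairs S)); first by rewrite sum_nat_const mulnC.
by move=> S' /imsetP[h Gh ->]; apply: fix_pairs_homAct.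
Qed.

Lemma sum_fix_pairs :
  (\sum_(S' : 'M[F]_(da, db)) fix_pairs S' =
   \sum_(g in G) \sum_(X in B) (tupconj g X == X) * #|intertwiners a b g X|)%N.
Proof.
rewrite /fix_pairs exchange_big; apply: eq_bigr => g Gg.
rewrite exchange_big; apply: eq_bigr => X XB.
rewrite /intertwiners -sum1_card [RHS]big_distrr [RHS]big_mkcond /=; apply: eq_bigr => S _.
rewrite inE /homAct conjmx_fixE ?Aut_unit ?inA //.
by case: (tupconj g X == X); case: (X a *m S == S *m X b); case: (g a *m S == S *m g b).
Qed.

Lemma sum_gamma_addArrow (Xi : {set 'M[F]_(da, db)}) : is_orbit_transversal G Xi ->
  ((\sum_(S in Xi) gamma (G :&: AutQ (addArrow S)) (B :&: EndQ (addArrow S))) * #|G| =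
   \sum_(g in G) \sum_(X in B) (tupconj g X == X) * #|intertwiners a b g X|)%N.
Proof.
move=> HXi; rewrite big_distrl /= (eq_bigr _ (fun S _ => gamma_addArrow S)).
by rewrite -sum_fix_pairs_transversal // sum_fix_pairs.
Qed.

End Transversal.

Theorem mainTheorem10 (F : finFieldType) (Q : qrep F) (a b : qV Q)
  (n : nat) (i : 'M[F]_(@qdim _ Q a, n)) (p : 'M[F]_(n, @qdim _ Q b))
  (i_inj : row_free i) (p_surj : row_full p) (exact : (i == kermx p)%MS)
  (G : {set qtuples Q}) (HGsub : G \subset AutQ Q) (HG : is_subgroup G)
  (B : {set qtuples Q}) (HBsub : B \subset EndQ Q)
  (HBinv : forall g X, g \in G -> X \in B -> tupconj g X \in B)
  (Xi : {set 'M[F]_(@qdim _ Q a, @qdim _ Q b)}) (HXi : is_orbit_transversal G Xi) :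
  gamma [set g in AutQ (Omega i p) | restrict g \in G]
        [set X in EndQ (Omega i p) | restrict X \in B]
  = (\sum_(S in Xi)
       gamma (G :&: AutQ (addArrow S)) (B :&: EndQ (addArrow S)))%N.
Proof.
have [j [s spl]] := split_exact i_inj p_surj exact.
have Gpos : (0 < #|G|)%N by apply/card_gt0P; exists (tup1 Q); case: HG.
apply/eqP; rewrite -(eqn_pmul2r Gpos).
rewrite (gamma_Omega spl HGsub HG HBsub HBinv).
by rewrite (sum_gamma_addArrow HGsub HG HBsub HBinv HXi).
Qed.
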